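(* Let $q$ be a prime with $q \equiv 1 \pmod 6$ or $q = 3$, and let $s$ be an integer with $\Phi_6(s) \equiv 0 \pmod q$ or $\Phi_3(s) \equiv 0 \pmod q$, where $\Phi_3(x)=x^2+x+1$, $\Phi_4(x)=x^2+1$, $\Phi_6(x)=x^2-x+1$. Define \begin{align*} f_1(x) &= qx^2+(2s+1)x+\Phi_3(s)/q, & f_2(x) &= q^2x^2+(2s-1)qx+\Phi_6(s),\\ f_3(x) &= q^2x^2+(2s+1)qx+\Phi_3(s), & f_4(x) &= qx^2+(2s-1)x+\Phi_6(s)/q. \end{align*} Then for all $x\in\mathbb{Z}$, \[ \Phi_6(\Phi_4(qx+s)) = \begin{cases} q\,f_1(x)f_2(x), & \text{if } q \mid \Phi_3(s),\\ q\,f_3(x)f_4(x), & \text{if } q \mid \Phi_6(s),\end{cases} \] and (in each case in which they have integer coefficients) the polynomials $f_1, f_2, f_3, f_4$ are irreducible over $\mathbb{Z}$.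
   Context: A polynomial in $\mathbb{Z}[x]$ is called irreducible over $\mathbb{Z}$ if it is not a product of two non-constant polynomials with integer coefficients. *)

From mathcomp Require Import all_boot all_order all_algebra.
Set Implicit Arguments. Unset Strict Implicit. Unset Printing Implicit Defensive.
Import Order.TTheory GRing.Theory Num.Theory.
Local Open Scope ring_scope.

Definition Phi3 (x : int) : int := x ^+ 2 + x + 1.
Definition Phi4 (x : int) : int := x ^+ 2 + 1.
Definition Phi6 (x : int) : int := x ^+ 2 - x + 1.

(* The four quadratics; Phi3 s / q and Phi6 s / q are integer (Euclidean)
   quotients, only used when q divides the numerator. *)
Definition f1 (q s : int) : {poly int} :=
  q *: 'X^2 + (2 * s + 1) *: 'X + polyC (Phi3 s %/ q)%Z.
Definition f2 (q s : int) : {poly int} :=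
  (q ^+ 2) *: 'X^2 + ((2 * s - 1) * q) *: 'X + polyC (Phi6 s).
Definition f3 (q s : int) : {poly int} :=
  (q ^+ 2) *: 'X^2 + ((2 * s + 1) * q) *: 'X + polyC (Phi3 s).
Definition f4 (q s : int) : {poly int} :=
  q *: 'X^2 + (2 * s - 1) *: 'X + polyC (Phi6 s %/ q)%Z.

Definition irreducible_Z (p : {poly int}) : Prop :=
  ~ exists g h : {poly int}, (1 < size g)%N /\ (1 < size h)%N /\ p = g * h.

From mathcomp Require Import all_boot all_order all_algebra.
From mathcomp Require Import ring zify.
Import Order.TTheory GRing.Theory Num.Theory.
Local Open Scope ring_scope.

(* With y = q x + s one has Phi6 (Phi4 y) = y^4 + y^2 + 1 = Phi3 y * Phi6 y,
   and the four quadratics are Phi3 y, Phi6 y (possibly divided by q) written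
   in the variable x.  Each has discriminant -3 or -3 q^2; a product of two
   linear integer polynomials has a square discriminant, so none factors. *)

Section Deg2Poly.

Variable R : idomainType.
Implicit Types (a b c : R) (p : {poly R}).

Lemma coef_deg2_poly a b c (i : nat) :
  (a *: 'X^2 + b *: 'X + c%:P)`_i =
  if i == 0%N then c else if i == 1%N then b else if i == 2%N then a else 0.
Proof. by case: i => [|[|[|i]]]; rewrite !coefE /= !(mulr0, mulr1, addr0, add0r). Qed.

Lemma size_deg2_poly_le a b c : (size (a *: 'X^2 + b *: 'X + c%:P)%R <= 3)%N.
Proof. by apply/leq_sizeP => -[|[|[|i]]] //; rewrite coef_deg2_poly. Qed.

Lemma deg2_poly_inj a b c a' b' c' :
  a *: 'X^2 + b *: 'X + c%:P = a' *: 'X^2 + b' *: 'X + c'%:P ->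
  [/\ a = a', b = b' & c = c'].
Proof.
move=> E; have coefE_i i := congr1 (fun p => p`_i) E.
by move: (coefE_i 2%N) (coefE_i 1%N) (coefE_i 0%N); rewrite !coef_deg2_poly.
Qed.

Lemma size2_linear {p} : (size p <= 2)%N -> p = p`_1 *: 'X + (p`_0)%:P.
Proof.
move=> sp; apply/polyP => -[|[|i]]; rewrite !coefE /= ?(mulr0, mulr1, addr0, add0r) //.
by rewrite nth_default //; apply: leq_trans sp _.
Qed.

Lemma mul_linear_poly (u v w z : R) :
  (u *: 'X + v%:P) * (w *: 'X + z%:P) =
  (u * w) *: 'X^2 + (u * z + v * w) *: 'X + (v * z)%:P.
Proof. by rewrite -!mul_polyC !(polyCM, polyCD); ring. Qed.

Lemma deg2_factor_disc {a b c} {g h : {poly R}} :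
  (1 < size g)%N -> (1 < size h)%N -> a *: 'X^2 + b *: 'X + c%:P = g * h ->
  b ^+ 2 - 4 * a * c = (g`_1 * h`_0 - g`_0 * h`_1) ^+ 2.
Proof.
move=> sg sh E.
have g0 : g != 0 by rewrite -size_poly_gt0 (ltn_trans _ sg).
have h0 : h != 0 by rewrite -size_poly_gt0 (ltn_trans _ sh).
have := size_deg2_poly_le a b c; rewrite E size_mul // => sgh.
have sg2 : (size g <= 2)%N by lia.
have sh2 : (size h <= 2)%N by lia.
rewrite (size2_linear sg2) (size2_linear sh2) mul_linear_poly in E.
by case/deg2_poly_inj: E => -> -> ->; ring.
Qed.

Lemma horner_deg2_poly a b c x :
  (a *: 'X^2 + b *: 'X + c%:P).[x] = a * x ^+ 2 + b * x + c.
Proof. by rewrite !(hornerD, hornerZ, hornerXn, hornerX, hornerC). Qed.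

End Deg2Poly.

Lemma irreducible_Z_deg2 (a b c : int) :
  b ^+ 2 - 4 * a * c < 0 -> irreducible_Z (a *: 'X^2 + b *: 'X + c%:P).
Proof.
move=> disc_lt0 [g [h [sg [sh E]]]].
by move: disc_lt0; rewrite (deg2_factor_disc _ sg sh E) ltNge sqr_ge0.
Qed.

Lemma Phi6_Phi4 (y : int) : Phi6 (Phi4 y) = Phi3 y * Phi6 y.
Proof. by rewrite /Phi6 /Phi4 /Phi3; ring. Qed.

Section Quadratics.

Variables q s : int.

Lemma horner_f2 x : (f2 q s).[x] = Phi6 (q * x + s).
Proof. by rewrite horner_deg2_poly /Phi6; ring. Qed.

Lemma horner_f3 x : (f3 q s).[x] = Phi3 (q * x + s).
Proof. by rewrite horner_deg2_poly /Phi3; ring. Qed.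

Lemma horner_f1 x : (q %| Phi3 s)%Z -> q * (f1 q s).[x] = Phi3 (q * x + s).
Proof.
move=> /divzK Phi3_sq.
by rewrite horner_deg2_poly mulrDr [q * (_ %/ _)%Z]mulrC Phi3_sq /Phi3; ring.
Qed.

Lemma horner_f4 x : (q %| Phi6 s)%Z -> q * (f4 q s).[x] = Phi6 (q * x + s).
Proof.
move=> /divzK Phi6_sq.
by rewrite horner_deg2_poly mulrDr [q * (_ %/ _)%Z]mulrC Phi6_sq /Phi6; ring.
Qed.

Lemma irreducible_f1 : (q %| Phi3 s)%Z -> irreducible_Z (f1 q s).
Proof.
move=> /divzK Phi3_sq; apply: irreducible_Z_deg2.
suff -> : (2 * s + 1) ^+ 2 - 4 * q * (Phi3 s %/ q)%Z = -3 by [].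
by rewrite -mulrA [q * _]mulrC Phi3_sq /Phi3; ring.
Qed.

Lemma irreducible_f4 : (q %| Phi6 s)%Z -> irreducible_Z (f4 q s).
Proof.
move=> /divzK Phi6_sq; apply: irreducible_Z_deg2.
suff -> : (2 * s - 1) ^+ 2 - 4 * q * (Phi6 s %/ q)%Z = -3 by [].
by rewrite -mulrA [q * _]mulrC Phi6_sq /Phi6; ring.
Qed.

Hypothesis q_neq0 : q != 0.

Lemma irreducible_f2 : irreducible_Z (f2 q s).
Proof.
apply: irreducible_Z_deg2.
suff -> : ((2 * s - 1) * q) ^+ 2 - 4 * q ^+ 2 * Phi6 s = - (3 * q ^+ 2).
  by rewrite oppr_lt0 mulr_gt0 // exprn_even_gt0.
by rewrite /Phi6; ring.
Qed.

Lemma irreducible_f3 : irreducible_Z (f3 q s).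
Proof.
apply: irreducible_Z_deg2.
suff -> : ((2 * s + 1) * q) ^+ 2 - 4 * q ^+ 2 * Phi3 s = - (3 * q ^+ 2).
  by rewrite oppr_lt0 mulr_gt0 // exprn_even_gt0.
by rewrite /Phi3; ring.
Qed.

End Quadratics.

Theorem lemma1 (q : nat) (s : int)
  (hq : prime q) (hq6 : (q %% 6 = 1)%N \/ q = 3%N)
  (hs : (q%:Z %| Phi6 s)%Z \/ (q%:Z %| Phi3 s)%Z) :
  ((q%:Z %| Phi3 s)%Z ->
     (forall x : int, Phi6 (Phi4 (q%:Z * x + s)) =
                      q%:Z * (f1 q s).[x] * (f2 q s).[x])
     /\ irreducible_Z (f1 q s))
  /\ ((q%:Z %| Phi6 s)%Z ->
     (forall x : int, Phi6 (Phi4 (q%:Z * x + s)) =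
                      q%:Z * (f3 q s).[x] * (f4 q s).[x])
     /\ irreducible_Z (f4 q s))
  /\ irreducible_Z (f2 q s) /\ irreducible_Z (f3 q s).
Proof.
have q_neq0 : q%:Z != 0 by rewrite eqz_nat -lt0n prime_gt0.
split; [|split; [|split]].
- move=> Phi3_sq; split; last exact: irreducible_f1.
  by move=> x; rewrite Phi6_Phi4 horner_f1 // horner_f2.
- move=> Phi6_sq; split; last exact: irreducible_f4.
  by move=> x; rewrite Phi6_Phi4 -mulrA mulrCA horner_f4 // horner_f3.
- exact: irreducible_f2.
- exact: irreducible_f3.
Qed.
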